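(* Let $S(\mathbf x)$ be the $12\times 34$ symbolic matrix whose entry in row $i$ and column $j$ is a distinct variable if $j$ belongs to the list $R_i$ below and $0$ otherwise: $R_1=\{4,5,6,14,15,16,17,18,19,20,21\}$, $R_2=\{4,7,8,9,14,15,16,17,22,23,24,25\}$, $R_3=\{7,10,11,14,15,18,19,22,26,27\}$, $R_4=\{5,12,13,16,17,20,23,24,28,29,30\}$, $R_5=\{8,10,12,22,23,26,28,29,31,32,33\}$, $R_6=\{1,11,13,18,20,27,30,34\}$, $R_7=\{2,9,24,25,30,31,34\}$, $R_8=\{3,6,19,21,26,31,32,33,34\}$, $R_9=\{1,4,8,21,25,28,32,33\}$, $R_{10}=\{2,5,10,14,18,19,21,27,28,29,32\}$, $R_{11}=\{3,7,13,16,23,24,25,27,29\}$, $R_{12}=\{6,9,11,12,15,17,20,22,26,30,31,33,34\}$ (this is the symbolic slack matrix of the Perles polytope, an $8$-dimensional polytope with $12$ vertices and $34$ facets). Let $x_1,\dots,x_{120}$ be its variables. Then the slack ideal $$I=\langle 10\text{-minors of } S(\mathbf x)\rangle : (x_1x_2\cdots x_{120})^\infty\subseteq\mathbb{C}[x_1,\dots,x_{120}]$$ is not a prime ideal.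
   Context: The Perles polytope is the classical $8$-dimensional polytope with $12$ vertices and $34$ facets which is projectively unique and has no rational realization; it is defined by an affine Gale diagram consisting of the points $A,B,C,D,E,F,G,H$ (positive) and $F,G,H,I$ (negative) built from a regular pentagon and its pentagram, with $E,F,H,G$ four vertices of the pentagon, $I$ its center, and $A,B,C,D$ four tips of the pentagram. Its vertices are labelled $A,B,C,D,E,F,G,H,-F,-G,-H,-I$ (rows $1$ to $12$ above) and its $34$ facets (columns) correspond to the minimal positive circuits of the Gale diagram; the entry in row $i$, column $j$ of the slack matrix is nonzero exactly when the vertex $i$ does not lie on facet $j$, which is the pattern given in the claim. For a $d$-polytope, the slack ideal is the ideal of $(d+2)$-minors of the symbolic slack matrix saturated by the product of all variables; here $d=8$. *)

From HB Require Import structures.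
From mathcomp Require Import all_boot all_order all_algebra.
From mathcomp Require Import complex.
From mathcomp Require reals.
From mathcomp Require Import mpoly.
Set Implicit Arguments. Unset Strict Implicit. Unset Printing Implicit Defensive.
Import Order.TTheory GRing.Theory Num.Theory.
Local Open Scope ring_scope.

(* Supports R_1..R_12 of the rows of the symbolic slack matrix of the Perles
   polytope (1-based column indices, as in the paper). *)
Definition perles_rows : seq (seq nat) :=
  [:: [:: 4;5;6;14;15;16;17;18;19;20;21];
      [:: 4;7;8;9;14;15;16;17;22;23;24;25];
      [:: 7;10;11;14;15;18;19;22;26;27];
      [:: 5;12;13;16;17;20;23;24;28;29;30];
      [:: 8;10;12;22;23;26;28;29;31;32;33];
      [:: 1;11;13;18;20;27;30;34];
      [:: 2;9;24;25;30;31;34];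
      [:: 3;6;19;21;26;31;32;33;34];
      [:: 1;4;8;21;25;28;32;33];
      [:: 2;5;10;14;18;19;21;27;28;29;32];
      [:: 3;7;13;16;23;24;25;27;29];
      [:: 6;9;11;12;15;17;20;22;26;30;31;33;34] ].

Definition perles_supp (i : 'I_12) (j : 'I_34) : bool :=
  j.+1 \in nth [::] perles_rows i.

(* the variables are numbered 0..119 in row-major order over the support *)
Definition perles_var_index (i : 'I_12) (j : 'I_34) : nat :=
  \sum_(i' < 12) \sum_(j' < 34)
     [&& perles_supp i' j' & (i' < i) || ((i' == i) && (j' < j))].

Definition perles_slack (K : comRingType) : 'M[{mpoly K[120]}]_(12, 34) :=
  \matrix_(i, j) (if perles_supp i j then 'X_(inord (perles_var_index i j))
                  else 0).

Definition is_minor (T : comRingType) (m n k : nat) (A : 'M[T]_(m, n))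
  (p : T) : Prop :=
  exists (f : 'I_k -> 'I_m) (g : 'I_k -> 'I_n),
    [/\ injective f, injective g & p = \det (mxsub f g A)].

Definition ideal_gen (T : comRingType) (G : T -> Prop) (p : T) : Prop :=
  exists s : seq (T * T),
    (forall c, c \in s -> G c.2) /\ p = \sum_(c <- s) c.1 * c.2.

Definition saturation (T : comRingType) (J : T -> Prop) (u : T) (p : T) : Prop :=
  exists n : nat, J (u ^+ n * p).

Definition prime_ideal (T : comRingType) (I : T -> Prop) : Prop :=
  ~ I 1 /\ forall f g : T, I (f * g) -> I f \/ I g.

(* slack ideal of a d-polytope with symbolic slack matrix S:
   <(d+2)-minors of S> : (product of all variables)^oo *)
Definition perles_slack_ideal (K : comRingType) : {mpoly K[120]} -> Prop :=
  saturation (ideal_gen (is_minor 10 (perles_slack K)))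
             (\prod_(i < 120) 'X_i).

Lemma perles_rows_size : sumn (map size perles_rows) = 120%N.
Proof. by []. Qed.
Arguments perles_slack_ideal K : clear implicits.
Arguments perles_slack K : clear implicits.

From HB Require Import structures.
From mathcomp Require Import all_boot all_order all_algebra.
From mathcomp Require Import complex.
From mathcomp Require Import reals.
From mathcomp Require Import mpoly.
From mathcomp Require Import ring.
Set Implicit Arguments. Unset Strict Implicit. Unset Printing Implicit Defensive.
Local Open Scope ring_scope.
Import GRing.Theory Num.Theory.

(* Write t1 = x18 x34 x48 and t3 = x20 x37 x46 (variables numbered from 0).
   Seven 10-minors of S are monomials times binomials or trinomials; since the
   saturation allows monomial factors to be cancelled, combining them puts
   q = t3^2 - t3 t1 - t1^2 into the slack ideal.  If r^2 = r + 1 then also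
   (1 - r)^2 = (1 - r) + 1 and q = (t3 - r t1) (t3 - (1 - r) t1).  Neither
   factor is in the ideal: for each root r there is a point with nonzero
   coordinates in Z[r] at which S is a 12 x 9 times 9 x 34 product, so every
   10-minor, hence the whole slack ideal, vanishes there, while t3 - (1 - r) t1
   does not. *)

Section IdealGen.
Variables (T : comRingType) (G : T -> Prop).

Lemma ideal_gen_mem g : G g -> ideal_gen G g.
Proof.
by move=> Gg; exists [:: (1, g)]; split=> [c|]; rewrite ?big_seq1 ?mul1r // inE => /eqP ->.
Qed.

Lemma ideal_gen_add p q : ideal_gen G p -> ideal_gen G q -> ideal_gen G (p + q).
Proof.
move=> [s [sG ->]] [s' [s'G ->]]; exists (s ++ s'); split; last by rewrite big_cat.
by move=> c; rewrite mem_cat => /orP[/sG | /s'G].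
Qed.

Lemma ideal_gen_mull r p : ideal_gen G p -> ideal_gen G (r * p).
Proof.
move=> [s [sG ->]]; exists [seq (r * c.1, c.2) | c <- s]; split.
  by move=> c /mapP[c' /sG Gc' ->].
by rewrite big_map mulr_sumr; apply: eq_bigr => c _; rewrite mulrA.
Qed.

Variable u : T.
Local Notation I := (saturation (ideal_gen G) u).

Lemma saturation_mem p : ideal_gen G p -> I p.
Proof. by exists 0%N; rewrite expr0 mul1r. Qed.

Lemma saturation_add p q : I p -> I q -> I (p + q).
Proof.
move=> [m Ip] [n Iq]; exists (m + n)%N.
have -> : u ^+ (m + n) * (p + q) = u ^+ n * (u ^+ m * p) + u ^+ m * (u ^+ n * q).
  by rewrite exprD; ring.
by apply: ideal_gen_add; apply: ideal_gen_mull.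
Qed.

Lemma saturation_mull r p : I p -> I (r * p).
Proof.
move=> [n Ip]; exists n.
by rewrite mulrCA; apply: ideal_gen_mull.
Qed.

Lemma saturation_divisor v w p : u = v * w -> I (v * p) -> I p.
Proof.
move=> uvw [n Ivp]; exists n.+1.
have -> : u ^+ n.+1 * p = w * (u ^+ n * (v * p)) by rewrite exprSr uvw; ring.
exact: ideal_gen_mull.
Qed.

End IdealGen.

Lemma saturation_eval_eq0 (T : comRingType) (F : idomainType)
    (phi : {rmorphism T -> F}) (G : T -> Prop) (u p : T) :
  (forall g, G g -> phi g = 0) -> phi u != 0 ->
  saturation (ideal_gen G) u p -> phi p = 0.
Proof.
move=> phiG phiu [n [s [sG snp]]].
have : phi (u ^+ n * p) = 0.
  rewrite snp rmorph_sum big1_seq // => c /andP[_ /sG /phiG phic].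
  by rewrite rmorphM phic mulr0.
by rewrite rmorphM rmorphXn => /eqP; rewrite mulf_eq0 expf_eq0 (negbTE phiu) andbF => /eqP.
Qed.

Lemma det_mxsub_mul_eq0 (F : fieldType) m n r k (A : 'M[F]_(m, r))
    (B : 'M[F]_(r, n)) (f : 'I_k -> 'I_m) (g : 'I_k -> 'I_n) :
  (r < k)%N -> \det (mxsub f g (A *m B)) = 0.
Proof.
move=> ltrk; apply/eqP; apply: contraTT ltrk; rewrite mxsub_mul -leqNgt => detN0.
have /mxrank_unit <- : rowsub f A *m colsub g B \in unitmx by rewrite unitmxE unitfE.
exact: leq_trans (mxrankM_maxl _ _) (rank_leq_col _).
Qed.

Definition minor_table (i : nat) (rs : seq (seq (option nat))) :=
  [seq behead r | r <- take i rs ++ drop i.+1 rs].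

(* A table [rs] stands for the matrix with entry [x k] at (i, j) when
   [nth None (nth [::] rs i) j = Some k], and 0 otherwise.  [table_det] expands
   its determinant along the first column into a list of signed monomials. *)
Fixpoint table_det (n : nat) (rs : seq (seq (option nat))) : seq (bool * seq nat) :=
  if n is n'.+1 then
    flatten [seq if head None (nth [::] rs i) is Some v then
                   [seq (odd i (+) t.1, v :: t.2) | t <- table_det n' (minor_table i rs)]
                 else [::] | i <- iota 0 n]
  else [:: (false, [::])].

Lemma nth_minor_table i rs k :
  nth [::] (minor_table i rs) k = behead (nth [::] rs (bump i k)).
Proof.
have nth_map_behead s m : nth [::] (map behead s) m = behead (nth [::] s m).
  by elim: s m => [|r s IHs] [|m] //=.
rewrite /minor_table nth_map_behead; congr behead.
elim: rs i k => [|r rs IHrs] [|i] [|k] //=; rewrite ?nth_nil ?drop0 //.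
by rewrite bumpS IHrs.
Qed.

Section TableDeterminant.
Variables (R : comRingType) (x : nat -> R).

Definition monomial (l : seq nat) : R := \prod_(k <- l) x k.

Definition signed_sum (l : seq (bool * seq nat)) : R :=
  \sum_(t <- l) (-1) ^+ t.1 * monomial t.2.

Definition table_entry (o : option nat) : R := if o is Some k then x k else 0.

Definition table_mx n (rs : seq (seq (option nat))) : 'M[R]_n :=
  \matrix_(i, j) table_entry (nth None (nth [::] rs i) j).

Lemma table_mx_minor n rs (i : 'I_n.+1) :
  row' i (col' ord0 (table_mx n.+1 rs)) = table_mx n (minor_table i rs).
Proof. by apply/matrixP => k l; rewrite !mxE nth_minor_table nth_behead. Qed.

Lemma table_detE n rs : signed_sum (table_det n rs) = \det (table_mx n rs).
Proof.
elim: n rs => [|n IHn] rs.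
  by rewrite det_mx00 /signed_sum /monomial big_seq1 big_nil mulr1.
rewrite (expand_det_col _ ord0) /signed_sum big_flatten big_map.
have -> : iota 0 n.+1 = index_iota 0 n.+1 by rewrite /index_iota subn0.
rewrite big_mkord.
apply: eq_bigr => i _; rewrite /cofactor table_mx_minor -IHn mxE nth0.
case: (head None (nth [::] rs i)) => [v|]; last by rewrite big_nil mul0r.
rewrite big_map /signed_sum !mulr_sumr; apply: eq_bigr => t _ /=.
by rewrite /monomial big_cons signr_addb signr_odd addn0; ring.
Qed.

End TableDeterminant.

Lemma grid_all m n (P : nat -> nat -> bool) :
  all (fun a => all (P a) (iota 0 n)) (iota 0 m) ->
  forall a b, (a < m)%N -> (b < n)%N -> P a b.
Proof.
move=> /allP Pmn a b am bn.
have /allP Pa : all (P a) (iota 0 n) by apply: Pmn; rewrite mem_iota.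
by apply: Pa; rewrite mem_iota.
Qed.

Definition in_support (a b : nat) : bool := b.+1 \in nth [::] perles_rows a.

Definition var_index (i j : nat) : nat :=
  sumn [seq sumn [seq nat_of_bool [&& in_support a c & (a < i) || (a == i) && (c < j)]%N
                 | c <- iota 0 34] | a <- iota 0 12].

Definition slack_var (a b : nat) : option nat :=
  if in_support a b then Some (var_index a b) else None.

Lemma perles_var_indexE (i : 'I_12) (j : 'I_34) : perles_var_index i j = var_index i j.
Proof.
have sum_iota n (F : nat -> nat) : (\sum_(k < n) F k)%N = sumn [seq F k | k <- iota 0 n].
  by rewrite sumnE big_map -(big_mkord xpredT) /index_iota subn0.
rewrite /perles_var_index (sum_iota 12 (fun a => \sum_(c < 34)
  nat_of_bool [&& in_support a c & (a < i) || (a == i) && (c < j)])%N).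
congr sumn; apply: eq_map => a.
by rewrite (sum_iota 34 (fun c =>
  nat_of_bool [&& in_support a c & (a < i) || (a == i) && (c < j)])%N).
Qed.

Lemma var_index_lt a b :
  (a < 12)%N -> (b < 34)%N -> in_support a b -> (var_index a b < 120)%N.
Proof.
move=> am bn; apply/implyP; move: a b am bn.
by apply: grid_all; vm_compute.
Qed.

Definition slack_table (rl cl : seq nat) : seq (seq (option nat)) :=
  [seq [seq slack_var a b | b <- cl] | a <- rl].

Section SlackIdeal.
Variable K : comRingType.
Local Notation I := (perles_slack_ideal K).

Definition xvar (k : nat) : {mpoly K[120]} := 'X_(inord k).
Local Notation x := xvar.

Lemma perles_slackE a b : (a < 12)%N -> (b < 34)%N ->
  perles_slack K (inord a) (inord b) = table_entry x (slack_var a b).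
Proof.
move=> am bn; rewrite mxE /perles_supp /slack_var /in_support !inordK //.
by case: ifP => // ab_supp; rewrite perles_var_indexE (inordK am) (inordK bn).
Qed.

Lemma slack_ideal_minor rl cl :
  size rl = 10%N -> size cl = 10%N -> uniq rl -> uniq cl ->
  all (fun a => a < 12)%N rl -> all (fun b => b < 34)%N cl ->
  I (signed_sum x (table_det 10 (slack_table rl cl))).
Proof.
move=> rl10 cl10 rl_uniq cl_uniq rl12 cl34.
have rl_lt (i : 'I_10) : (nth 0%N rl i < 12)%N.
  by apply: (allP rl12); rewrite mem_nth ?rl10.
have cl_lt (i : 'I_10) : (nth 0%N cl i < 34)%N.
  by apply: (allP cl34); rewrite mem_nth ?cl10.
pose f (i : 'I_10) : 'I_12 := inord (nth 0%N rl i).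
pose g (i : 'I_10) : 'I_34 := inord (nth 0%N cl i).
apply/saturation_mem/ideal_gen_mem; exists f, g; split.
- move=> i j /(congr1 (@nat_of_ord _)); rewrite /f !inordK // => /eqP.
  by rewrite nth_uniq ?rl10 // => /eqP/val_inj.
- move=> i j /(congr1 (@nat_of_ord _)); rewrite /g !inordK // => /eqP.
  by rewrite nth_uniq ?cl10 // => /eqP/val_inj.
rewrite table_detE; congr (\det _); apply/matrixP => i j.
by rewrite [LHS]mxE [RHS]mxE perles_slackE // !(nth_map 0%N) ?rl10 ?cl10.
Qed.

Lemma slack_ideal_monomial_cancel l p : I (monomial x l * p) -> I p.
Proof.
elim: l p => [|k l IHl] p; first by rewrite /monomial big_nil mul1r.
rewrite /monomial big_cons -mulrA => /saturation_divisor Ip; apply/IHl/Ip.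
by rewrite (bigD1 (inord k)).
Qed.

Lemma slack_ideal_minor_factor rl cl l p :
  size rl = 10%N -> size cl = 10%N -> uniq rl -> uniq cl ->
  all (fun a => a < 12)%N rl -> all (fun b => b < 34)%N cl ->
  signed_sum x (table_det 10 (slack_table rl cl)) = monomial x l * p -> I p.
Proof.
move=> rl10 cl10 rl_uniq cl_uniq rl12 cl34 detE.
by apply: (slack_ideal_monomial_cancel (l := l)); rewrite -detE; apply: slack_ideal_minor.
Qed.

(* [ring] is much faster once the variables ['X_(inord k)] are abstracted. *)
Ltac ring_vars := move: xvar => ?; ring.

Ltac minor_identity :=
  match goal with |- context [table_det ?n ?rs] =>
    let L := eval vm_compute in (table_det n rs) in
    have -> : table_det n rs = L by vm_compute
  end;
  rewrite /signed_sum /monomial !big_cons !big_nil /=; ring_vars.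

Lemma slack_ideal_binom1 : I (x 19 * x 44 - x 13 * x 47).
Proof.
apply: (slack_ideal_minor_factor (rl := [:: 0; 1; 4; 3; 6; 9; 7; 2; 10; 5])
  (cl := [:: 7; 14; 21; 16; 8; 17; 31; 10; 2; 0])
  (l := [:: 4; 25; 37; 55; 64; 76; 91; 98])) => //.
by minor_identity.
Qed.

Lemma slack_ideal_binom2 : I (x 20 * x 44 - x 13 * x 48).
Proof.
apply: (slack_ideal_minor_factor (rl := [:: 0; 1; 4; 9; 2; 11; 3; 7; 6; 8])
  (cl := [:: 7; 15; 22; 27; 26; 11; 12; 31; 24; 0])
  (l := [:: 5; 32; 35; 66; 76; 79; 95; 110])) => //.
by minor_identity.
Qed.

Lemma slack_ideal_binom3 : I (x 14 * x 112 - x 18 * x 108).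
Proof.
apply: (slack_ideal_minor_factor (rl := [:: 0; 1; 11; 10; 8; 7; 5; 2; 4; 9])
  (cl := [:: 4; 8; 16; 23; 3; 5; 0; 10; 31; 1])
  (l := [:: 1; 25; 53; 55; 71; 80; 87; 103])) => //.
by minor_identity.
Qed.

Lemma slack_ideal_binom4 : I (x 19 * x 108 - x 14 * x 114).
Proof.
apply: (slack_ideal_minor_factor (rl := [:: 0; 1; 11; 7; 4; 3; 5; 10; 8; 6])
  (cl := [:: 8; 13; 21; 30; 9; 11; 19; 28; 7; 1])
  (l := [:: 3; 34; 45; 59; 63; 75; 81; 106])) => //.
by minor_identity.
Qed.

Lemma slack_ideal_binom5 : I (x 37 * x 110 - x 34 * x 112).
Proof.
apply: (slack_ideal_minor_factor (rl := [:: 2; 3; 11; 7; 10; 9; 6; 0; 5; 4])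
  (cl := [:: 11; 14; 16; 32; 12; 27; 33; 3; 0; 7])
  (l := [:: 0; 27; 44; 55; 69; 77; 95; 100])) => //.
by minor_identity.
Qed.

Lemma slack_ideal_trinom1 : I (x 18 * x 39 * x 46 - x 18 * x 34 * x 48 - x 20 * x 37 * x 46).
Proof.
apply: (slack_ideal_minor_factor (rl := [:: 1; 3; 4; 2; 8; 5; 9; 6; 0; 7])
  (cl := [:: 11; 16; 22; 25; 3; 10; 27; 1; 5; 2])
  (l := [:: 2; 31; 56; 63; 70; 80; 95])) => //.
by minor_identity.
Qed.

Lemma slack_ideal_trinom2 : I (x 39 * x 46 * x 114 - x 34 * x 48 * x 114 - x 39 * x 47 * x 110).
Proof.
apply: (slack_ideal_minor_factor (rl := [:: 3; 4; 11; 5; 7; 0; 8; 6; 9; 2])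
  (cl := [:: 11; 21; 22; 10; 25; 14; 32; 23; 4; 6])
  (l := [:: 4; 23; 56; 65; 74; 86; 88])) => //.
by minor_identity.
Qed.

Lemma slack_ideal_quartic : I (x 20 * x 37 * x 47 * x 110 - x 18 * x 34 * x 48 * x 114).
Proof.
apply: (slack_ideal_monomial_cancel (l := [:: 13; 14; 44])).
have -> : monomial x [:: 13; 14; 44] * (x 20 * x 37 * x 47 * x 110 - x 18 * x 34 * x 48 * x 114)
  = - (x 14 * x 20 * x 37 * x 44 * x 110) * (x 19 * x 44 - x 13 * x 47)
    + x 14 * x 19 * x 37 * x 44 * x 110 * (x 20 * x 44 - x 13 * x 48)
    + x 13 * x 19 * x 34 * x 44 * x 48 * (x 14 * x 112 - x 18 * x 108)
    + x 13 * x 18 * x 34 * x 44 * x 48 * (x 19 * x 108 - x 14 * x 114)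
    + x 13 * x 14 * x 19 * x 44 * x 48 * (x 37 * x 110 - x 34 * x 112).
  by rewrite /monomial !big_cons big_nil; ring_vars.
repeat apply: saturation_add; apply: saturation_mull.
- exact: slack_ideal_binom1.
- exact: slack_ideal_binom2.
- exact: slack_ideal_binom3.
- exact: slack_ideal_binom4.
- exact: slack_ideal_binom5.
Qed.

Definition t1 : {mpoly K[120]} := x 18 * x 34 * x 48.
Definition t3 : {mpoly K[120]} := x 20 * x 37 * x 46.

Lemma slack_ideal_sextic : I (t1 * t3 - x 18 * x 39 * x 46 * t3 + t1 * (x 18 * x 39 * x 46)).
Proof.
apply: (slack_ideal_monomial_cancel (l := [:: 34; 48; 114])).
have -> : monomial x [:: 34; 48; 114]
    * (t1 * t3 - x 18 * x 39 * x 46 * t3 + t1 * (x 18 * x 39 * x 46))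
  = - (t1 * t3) * (x 39 * x 46 * x 114 - x 34 * x 48 * x 114 - x 39 * x 47 * x 110)
    + (- (t1 * x 39 * x 46)) * (x 20 * x 37 * x 47 * x 110 - x 18 * x 34 * x 48 * x 114).
  by rewrite /monomial /t1 /t3 !big_cons big_nil; ring_vars.
apply: saturation_add; apply: saturation_mull.
- exact: slack_ideal_trinom2.
- exact: slack_ideal_quartic.
Qed.

Lemma slack_ideal_golden_form : I (t3 * t3 - t3 * t1 - t1 * t1).
Proof.
have -> : t3 * t3 - t3 * t1 - t1 * t1
  = (t1 - t3) * (x 18 * x 39 * x 46 - x 18 * x 34 * x 48 - x 20 * x 37 * x 46)
    + (-1) * (t1 * t3 - x 18 * x 39 * x 46 * t3 + t1 * (x 18 * x 39 * x 46)).
  by rewrite /t1 /t3; ring_vars.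
apply: saturation_add; apply: saturation_mull.
- exact: slack_ideal_trinom1.
- exact: slack_ideal_sextic.
Qed.

End SlackIdeal.

(* [(a, b)] stands for [a + b r] with [r ^ 2 = r + 1]. *)
Definition zphi := (int * int)%type.

Definition zphi_add (a b : zphi) : zphi := (a.1 + b.1, a.2 + b.2).
Definition zphi_mul (a b : zphi) : zphi :=
  (a.1 * b.1 + a.2 * b.2, a.1 * b.2 + a.2 * b.1 + a.2 * b.2).
Definition zphi_norm (a : zphi) : int := a.1 * a.1 + a.1 * a.2 - a.2 * a.2.
Definition zphi_dot (l : seq (zphi * zphi)) : zphi :=
  foldr (fun ab s => zphi_add (zphi_mul ab.1 ab.2) s) (0, 0) l.

Section ZphiEval.
Variables (F : numFieldType) (r : F).
Hypothesis r_golden : r * r = r + 1.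

Definition zphi_eval (z : zphi) : F := z.1%:~R + z.2%:~R * r.

Lemma zphi_eval_add a b : zphi_eval (zphi_add a b) = zphi_eval a + zphi_eval b.
Proof. by rewrite /zphi_eval /= !intrD; ring. Qed.

Lemma zphi_eval_mul a b : zphi_eval (zphi_mul a b) = zphi_eval a * zphi_eval b.
Proof.
apply/eqP; rewrite -subr_eq0; apply/eqP.
transitivity ((a.2 * b.2)%:~R * (r + 1 - r * r) : F).
  by rewrite /zphi_eval /zphi_mul /=; ring.
by rewrite r_golden subrr mulr0.
Qed.

(* The conjugate of [r] is [1 - r], and [(a + b r) (a + b - b r) = a^2 + a b - b^2]. *)
Lemma zphi_eval_neq0 z : zphi_norm z != 0 -> zphi_eval z != 0.
Proof.
apply: contra => /eqP z0.
have : zphi_eval z * ((z.1 + z.2)%:~R - z.2%:~R * r) = (zphi_norm z)%:~R.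
  apply/eqP; rewrite -subr_eq0; apply/eqP.
  transitivity ((z.2 * z.2)%:~R * (r + 1 - r * r) : F).
    by rewrite /zphi_eval /zphi_norm; ring.
  by rewrite r_golden subrr mulr0.
by rewrite z0 mul0r => /esym/eqP; rewrite intr_eq0.
Qed.

Lemma zphi_eval_dot n (f g : nat -> zphi) :
  zphi_eval (zphi_dot [seq (f k, g k) | k <- iota 0 n])
  = \sum_(k < n) zphi_eval (f k) * zphi_eval (g k).
Proof.
rewrite -(big_mkord xpredT (fun k => zphi_eval (f k) * zphi_eval (g k))).
rewrite /index_iota subn0; elim: (iota 0 n) => [|k s IHs].
  by rewrite big_nil /zphi_eval /= mul0r addr0.
by rewrite big_cons /= zphi_eval_add zphi_eval_mul IHs.
Qed.

End ZphiEval.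

(* The entry (a, b) of the product of these 12 x 9 and 9 x 34 matrices over
   Z[r] is the coordinate of the point on the variable at position (a, b) of S,
   and 0 off the support of S. *)
Definition point_left : seq (seq zphi) := (
  [:: [:: (1, 0); (0, 1); (1, -1); (-2, 1); (0, 0); (2, -1); (2, -1); (0, 0); (-2, 1)];
      [:: (0, 1); (1, 0); (-2, 1); (1, -1); (2, -1); (0, 0); (-1, 1); (-2, 1); (0, 0)];
      [:: (1, 0); (0, 0); (0, 0); (0, 0); (0, 0); (0, 0); (0, 0); (0, 0); (0, 0)];
      [:: (0, 0); (1, 0); (0, 0); (0, 0); (0, 0); (0, 0); (0, 0); (0, 0); (0, 0)];
      [:: (0, 0); (0, 0); (1, 0); (0, 0); (0, 0); (0, 0); (0, 0); (0, 0); (0, 0)];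
      [:: (0, 0); (0, 0); (0, 0); (1, 0); (0, 0); (0, 0); (0, 0); (0, 0); (0, 0)];
      [:: (0, 0); (0, 0); (0, 0); (0, 0); (1, 0); (0, 0); (0, 0); (0, 0); (0, 0)];
      [:: (0, 0); (0, 0); (0, 0); (0, 0); (0, 0); (1, 0); (0, 0); (0, 0); (0, 0)];
      [:: (0, 0); (0, 0); (0, 0); (0, 0); (0, 0); (0, 0); (1, 0); (0, 0); (0, 0)];
      [:: (0, 0); (0, 0); (0, 0); (0, 0); (0, 0); (0, 0); (0, 0); (1, 0); (0, 0)];
      [:: (0, 0); (0, 0); (0, 0); (0, 0); (0, 0); (0, 0); (0, 0); (0, 0); (1, 0)];
      [:: (2, 1); (2, 1); (0, 0); (0, 0); (3, -1); (3, -1); (0, 0); (-3, 1); (-3, 1)]])%Z.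

Definition point_right : seq (seq zphi) := (
  [:: [:: (0, 0); (0, 0); (0, 0); (0, 0); (0, 0); (0, 0); (0, -1); (0, 0); (0, 0);
         (-5, -3); (-1, -1); (0, 0); (0, 0); (1, 3); (1, 2); (0, 0); (0, 0); (-2, -1);
         (1, -2); (0, 0); (0, 0); (1, 1); (0, 0); (0, 0); (0, 0); (-1, 1); (-1, 2);
         (0, 0); (0, 0); (0, 0); (0, 0); (0, 0); (0, 0); (0, 0)];
      [:: (0, 0); (0, 0); (0, 0); (0, 0); (-1, 4); (0, 0); (0, 0); (0, 0); (0, 0);
         (0, 0); (0, 0); (1, -1); (7, -1); (0, 0); (0, 0); (1, 3); (1, 2); (0, 0);
         (0, 0); (-1, -1); (0, 0); (0, 0); (2, 1); (-1, 2); (0, 0); (0, 0); (0, 0);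
         (-3, 1); (-1, 2); (1, -1); (0, 0); (0, 0); (0, 0); (0, 0)];
      [:: (0, 0); (0, 0); (0, 0); (0, 0); (0, 0); (0, 0); (0, 0); (0, 1); (0, 0);
         (-3, -8); (0, 0); (0, -1); (0, 0); (0, 0); (0, 0); (0, 0); (0, 0); (0, 0);
         (0, 0); (0, 0); (0, 0); (1, 2); (2, 1); (0, 0); (0, 0); (1, 1); (0, 0);
         (-1, -3); (2, 1); (0, 0); (1, -1); (-1, 2); (1, 0); (0, 0)];
      [:: (1, 0); (0, 0); (0, 0); (0, 0); (0, 0); (0, 0); (0, 0); (0, 0); (0, 0);
         (0, 0); (-2, -3); (0, 0); (-1, 6); (0, 0); (0, 0); (0, 0); (0, 0); (-2, -1);
         (0, 0); (-1, -2); (0, 0); (0, 0); (0, 0); (0, 0); (0, 0); (0, 0); (2, 1);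
         (0, 0); (0, 0); (-1, -1); (0, 0); (0, 0); (0, 0); (1, -1)];
      [:: (0, 0); (1, 0); (0, 0); (0, 0); (0, 0); (0, 0); (0, 0); (0, 0); (1, 3);
         (0, 0); (0, 0); (0, 0); (0, 0); (0, 0); (0, 0); (0, 0); (0, 0); (0, 0);
         (0, 0); (0, 0); (0, 0); (0, 0); (0, 0); (2, 1); (1, -2); (0, 0); (0, 0);
         (0, 0); (0, 0); (-1, -1); (1, -1); (0, 0); (0, 0); (-1, 0)];
      [:: (0, 0); (0, 0); (1, 0); (0, 0); (0, 0); (-1, -1); (0, 0); (0, 0); (0, 0);
         (0, 0); (0, 0); (0, 0); (0, 0); (0, 0); (0, 0); (0, 0); (0, 0); (0, 0);
         (-2, -1); (0, 0); (2, 1); (0, 0); (0, 0); (0, 0); (0, 0); (1, 1); (0, 0);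
         (0, 0); (0, 0); (0, 0); (-1, 0); (3, -1); (1, 0); (1, -1)];
      [:: (1, 0); (0, 0); (0, 0); (-1, -2); (0, 0); (0, 0); (0, 0); (1, 1); (0, 0);
         (0, 0); (0, 0); (0, 0); (0, 0); (0, 0); (0, 0); (0, 0); (0, 0); (0, 0);
         (0, 0); (0, 0); (-1, 2); (0, 0); (0, 0); (0, 0); (1, -2); (0, 0); (0, 0);
         (-2, -1); (0, 0); (0, 0); (0, 0); (-1, 2); (-1, 1); (0, 0)];
      [:: (0, 0); (1, 0); (0, 0); (0, 0); (3, 7); (0, 0); (0, 0); (0, 0); (0, 0);
         (-8, -11); (0, 0); (0, 0); (0, 0); (4, 7); (0, 0); (0, 0); (0, 0); (-3, -4);
         (-3, -4); (0, 0); (2, 1); (0, 0); (0, 0); (0, 0); (0, 0); (0, 0); (2, 1);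
         (-2, -1); (-1, 2); (0, 0); (0, 0); (3, -1); (0, 0); (0, 0)];
      [:: (0, 0); (0, 0); (1, 0); (0, 0); (0, 0); (0, 0); (-1, -2); (0, 0); (0, 0);
         (0, 0); (0, 0); (0, 0); (6, 5); (0, 0); (0, 0); (4, 7); (0, 0); (0, 0);
         (0, 0); (0, 0); (0, 0); (0, 0); (3, 4); (3, 4); (1, -2); (0, 0); (-1, 2);
         (0, 0); (2, 1); (0, 0); (0, 0); (0, 0); (0, 0); (0, 0)]])%Z.

Definition point_entry (a b : nat) : zphi :=
  zphi_dot [seq (nth (0, 0) (nth [::] point_left a) k, nth (0, 0) (nth [::] point_right k) b)
           | k <- iota 0 9].

Definition var_pos (k : nat) : nat * nat :=
  nth (0, 0)%N [seq (a, b) | a <- iota 0 12, b <- [seq b <- iota 0 34 | in_support a b]] k.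

Definition point_var (k : nat) : zphi := point_entry (var_pos k).1 (var_pos k).2.

Lemma point_entryE a b : (a < 12)%N -> (b < 34)%N ->
  point_entry a b = if slack_var a b is Some k then point_var k else (0, 0).
Proof. by move=> am bn; apply/eqP; move: a b am bn; apply: grid_all; vm_compute. Qed.

Lemma point_var_norm_neq0 k : (k < 120)%N -> zphi_norm (point_var k) != 0.
Proof.
have /allP normsN0 : all (fun k => zphi_norm (point_var k) != 0) (iota 0 120) by vm_compute.
by move=> k120; apply: normsN0; rewrite mem_iota.
Qed.

Definition golden_witness : zphi :=
  zphi_add (zphi_mul (point_var 20) (zphi_mul (point_var 37) (point_var 46)))
    (zphi_mul (-1, 1) (zphi_mul (point_var 18) (zphi_mul (point_var 34) (point_var 48)))).

Lemma golden_witness_norm : zphi_norm golden_witness != 0.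
Proof. by vm_compute. Qed.

Section GoldenPoint.
Variables (F : numFieldType) (r : F).
Hypothesis r_golden : r * r = r + 1.

Definition golden_point (k : 'I_120) : F := zphi_eval r (point_var k).

Definition point_left_mx : 'M[F]_(12, 9) :=
  \matrix_(i, k) zphi_eval r (nth (0, 0) (nth [::] point_left i) k).
Definition point_right_mx : 'M[F]_(9, 34) :=
  \matrix_(k, j) zphi_eval r (nth (0, 0) (nth [::] point_right k) j).

Lemma perles_slack_at_point :
  map_mx (meval golden_point) (perles_slack F) = point_left_mx *m point_right_mx.
Proof.
apply/matrixP => i j; rewrite !mxE.
under eq_bigr do rewrite !mxE.
rewrite -(zphi_eval_dot r_golden 9 (fun k => nth (0, 0) (nth [::] point_left i) k)
  (fun k => nth (0, 0) (nth [::] point_right k) j)) -/(point_entry i j).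
have := point_entryE (ltn_ord i) (ltn_ord j).
rewrite /perles_supp /slack_var /in_support perles_var_indexE.
case: ifP => [ij_supp -> | _ ->].
  by rewrite mevalXU /golden_point inordK // (var_index_lt (ltn_ord i) (ltn_ord j)).
by rewrite meval0 /zphi_eval /= mul0r addr0.
Qed.

Lemma golden_point_neq0 k : golden_point k != 0.
Proof. exact/(zphi_eval_neq0 r_golden)/point_var_norm_neq0. Qed.

Lemma slack_ideal_eval_golden_point p : perles_slack_ideal F p -> meval golden_point p = 0.
Proof.
apply: saturation_eval_eq0 => [_ [f [g [_ _ ->]]] |].
  by rewrite -det_map_mx map_mxsub perles_slack_at_point det_mxsub_mul_eq0.
by rewrite rmorph_prod; apply/prodf_neq0 => k _ /=; rewrite mevalXU golden_point_neq0.
Qed.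

Lemma golden_factor_notin : ~ perles_slack_ideal F (t3 F - (1 - r)%:MP * t1 F).
Proof.
move=> /slack_ideal_eval_golden_point /eqP; apply/negP.
rewrite mevalB !mevalM mevalC !mevalXU /golden_point !inordK //.
have zphi_eval_conj : zphi_eval r (-1, 1) = - (1 - r) by rewrite /zphi_eval /=; ring.
have := zphi_eval_neq0 r_golden golden_witness_norm.
(* Abstracting [point_var] keeps rewriting from evaluating the coordinates. *)
rewrite /golden_witness; move: point_var => v.
rewrite zphi_eval_add !(zphi_eval_mul r_golden) zphi_eval_conj.
by apply: contraNN => /eqP eq0; apply/eqP; rewrite -eq0; ring.
Qed.

End GoldenPoint.

Lemma perles_slack_ideal_not_prime (F : numFieldType) (r : F) :
  r * r = r + 1 -> ~ prime_ideal (perles_slack_ideal F).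
Proof.
move=> r_golden [_ prime_I].
have r'_golden : (1 - r) * (1 - r) = (1 - r) + 1.
  by rewrite mulrBl !mulrBr r_golden; ring.
have golden_factorization : (t3 F - r%:MP * t1 F) * (t3 F - (1 - r)%:MP * t1 F)
    = t3 F * t3 F - t3 F * t1 F - t1 F * t1 F.
  apply/eqP; rewrite -subr_eq0; apply/eqP.
  transitivity ((r + 1 - r * r)%:MP * (t1 F * t1 F)).
    by rewrite !mpolyCB mpolyCD mpolyCM; ring.
  by rewrite r_golden subrr mpolyC0 mul0r.
have := prime_I (t3 F - r%:MP * t1 F) (t3 F - (1 - r)%:MP * t1 F).
rewrite golden_factorization => /(_ (slack_ideal_golden_form F)).
case=> [| /(golden_factor_notin r_golden) //].
by rewrite -{1}(subKr 1 r); apply: golden_factor_notin.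
Qed.

Lemma golden_root_exists (C : numClosedFieldType) : exists r : C, r * r = r + 1.
Proof.
have s5 : sqrtC 5 * sqrtC 5 = 5 :> C by rewrite -expr2 sqrtCK.
exists ((1 + sqrtC 5) / 2); apply/eqP; rewrite -subr_eq0; apply/eqP.
transitivity ((sqrtC 5 * sqrtC 5 - 5) / 4 : C); last by rewrite s5 subrr mul0r.
by field.
Qed.

Theorem theorem5p3 (R : realType) :
  ~ prime_ideal (perles_slack_ideal (complex R)).
Proof.
have [r r_golden] := golden_root_exists (complex R).
exact: perles_slack_ideal_not_prime r_golden.
Qed.
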